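(* Let $n\ge5$, $1\le m\le n-1$ with $2m\neq n$, $a>0$, and let $\Gamma^{m,n}$ be the closed discrete curve $p_k=a(\cos(2\pi mk/n),\sin(2\pi mk/n))$, $k=0,\dots,n-1$, with $l_0:=|p_{k+1}-p_k|=2a|\sin(m\pi/n)|$. Let $(A,B)\in\mathbb{R}^2$ and $\psi_k=A\cos(2\pi k/n)+B\sin(2\pi k/n)$. Then $\sum_k\psi_k=0$, and for every $C^2$ family $p(t)$ of closed discrete curves with $p(0)=\Gamma^{m,n}$, $\mathrm{Vol}(p(t))$ constant and $p_k'(0)=\psi_kN_k$, \[ \frac{d^2}{dt^2}\Big|_{t=0}L(p(t))=\frac{4}{l_0}\Big[\sin^2\frac{\pi}{n}-\cos\frac{2\pi}{n}\tan^2\frac{m\pi}{n}\Big]\sum_k\psi_k^2 . \] This value is $\ge0$ if $m\in\{1,n-1\}$, and is $<0$ if $2\le m\le n-2$ and $(A,B)\ne(0,0)$.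
   Context: A closed discrete curve is an $n$-tuple $(p_0,\dots,p_{n-1})$ of points of $\mathbb{R}^2$, indices modulo $n$, with $l_k:=|p_{k+1}-p_k|\ne0$ for all $k$. $R_\varphi$ denotes rotation of $\mathbb{R}^2$ by $\varphi$. Fix $R\in\{R_{\pi/2},R_{-\pi/2}\}$ and set $\sigma=+1$ if $R=R_{\pi/2}$, $\sigma=-1$ if $R=R_{-\pi/2}$. Edge normal $\nu_k:=R((p_{k+1}-p_k)/l_k)$. The signed angle $\theta_k\in(-\pi,\pi]$ at vertex $p_k$ is defined by $\nu_k=R_{\sigma\theta_k}\nu_{k-1}$. When $\theta_k\ne\pi$, the vertex normal is $N_k:=\dfrac{\nu_k+\nu_{k-1}}{1+\cos\theta_k}$. Length $L=\sum_k l_k$, area $\mathrm{Vol}=\frac12\sum_k\langle p_k,\nu_k\rangle l_k$. *)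

From Stdlib Require Import Reals Lra Lia.
From Coquelicot Require Import Coquelicot.
Open Scope R_scope.

Definition vsub (u v : R * R) : R * R := (fst u - fst v, snd u - snd v).
Definition vadd (u v : R * R) : R * R := (fst u + fst v, snd u + snd v).
Definition vscale (c : R) (u : R * R) : R * R := (c * fst u, c * snd u).
Definition dot (u v : R * R) : R := fst u * fst v + snd u * snd v.
Definition vnorm (u : R * R) : R := sqrt (dot u u).

Fixpoint sumR (n : nat) (f : nat -> R) : R :=
  match n with O => 0 | S n' => sumR n' f + f n' end.

(* A discrete curve with n points is p : nat -> R*R, read with indices mod n. *)
Definition pt (n : nat) (p : nat -> R * R) (k : nat) : R * R := p (k mod n).

Definition edge_len (n : nat) (p : nat -> R * R) (k : nat) : R :=
  vnorm (vsub (pt n p (S k)) (pt n p k)).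

Definition closed_curve (n : nat) (p : nat -> R * R) : Prop :=
  (0 < n)%nat /\ forall k, (k < n)%nat -> edge_len n p k <> 0.

(* R = R_{sigma pi/2}, sigma in {1,-1}: (x,y) |-> (-sigma y, sigma x) *)
Definition rotq (sigma : R) (u : R * R) : R * R := (- sigma * snd u, sigma * fst u).

Definition edge_normal (sigma : R) (n : nat) (p : nat -> R * R) (k : nat) : R * R :=
  rotq sigma (vscale (/ edge_len n p k) (vsub (pt n p (S k)) (pt n p k))).

(* cos theta_k, where nu_k = R_{sigma theta_k} nu_{k-1}; since nu_k, nu_{k-1}
   are unit vectors, cos theta_k = <nu_k, nu_{k-1}>. *)
Definition cos_angle (sigma : R) (n : nat) (p : nat -> R * R) (k : nat) : R :=
  dot (edge_normal sigma n p k) (edge_normal sigma n p (k + n - 1)).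

Definition vertex_normal (sigma : R) (n : nat) (p : nat -> R * R) (k : nat) : R * R :=
  vscale (/ (1 + cos_angle sigma n p k))
    (vadd (edge_normal sigma n p k) (edge_normal sigma n p (k + n - 1))).

Definition Len (n : nat) (p : nat -> R * R) : R := sumR n (edge_len n p).

Definition Vol (sigma : R) (n : nat) (p : nat -> R * R) : R :=
  / 2 * sumR n (fun k => dot (pt n p k) (edge_normal sigma n p k) * edge_len n p k).

Definition C2_on (eps : R) (f : R -> R) : Prop :=
  forall t, - eps < t < eps ->
    ex_derive f t /\ ex_derive (Derive f) t /\ continuous (Derive (Derive f)) t.

Definition Gamma (n m : nat) (a : R) (k : nat) : R * R :=
  (a * cos (2 * PI * INR m * INR k / INR n), a * sin (2 * PI * INR m * INR k / INR n)).

(* The proof has three layers.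
   1. Trigonometric sums: sums of cos (k w) and sin (k w) over a full period
      vanish; hence the first Fourier mode psi has zero sum, its squares have
      positive sum, and its autocorrelation is cos (2 pi / n) times its energy.
   2. Geometry of Gamma^{m,n}: every edge has length l0, the vertex normal is a
      fixed multiple of the position vector, and summation by parts against
      the edges of Gamma turns <e_k, e_k''> into cross products with Gamma.
   3. Variations: for any C^2 family of closed curves, L'' is the usual sum of
      (|e'|^2 + <e,e''>)/l - <e,e'>^2/l^3 over the edges, and constancy of the
      area kills the second derivative of the shoelace sum.  At Gamma the
      unknown accelerations p'' then only enter through this shoelace sum,
      which leaves an explicit quadratic form in psi.
   The sign statements reduce to elementary estimates on cos (m pi / n). *)
From Stdlib Require Import Reals Lra Lia.
From Coquelicot Require Import Coquelicot.
Open Scope R_scope.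

Lemma sumR_ext n f g : (forall k, (k < n)%nat -> f k = g k) -> sumR n f = sumR n g.
Proof.
  induction n as [|n IH]; intros Hfg; simpl; [reflexivity|].
  rewrite IH by (intros; apply Hfg; lia). rewrite Hfg by lia. reflexivity.
Qed.

Lemma sumR_plus n f g : sumR n (fun k => f k + g k) = sumR n f + sumR n g.
Proof. induction n as [|n IH]; simpl; [ring|]. rewrite IH; ring. Qed.

Lemma sumR_scal n c f : sumR n (fun k => c * f k) = c * sumR n f.
Proof. induction n as [|n IH]; simpl; [ring|]. rewrite IH; ring. Qed.

Lemma sumR_lincomb3 n (al be ga : R) f g h :
  sumR n (fun k => al * f k + be * g k + ga * h k)
  = al * sumR n f + be * sumR n g + ga * sumR n h.
Proof. induction n as [|n IH]; simpl; [ring|]. rewrite IH; ring. Qed.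

Lemma sumR_telescope n (F : nat -> R) : sumR n (fun k => F (S k) - F k) = F n - F O.
Proof. induction n as [|n IH]; simpl; [ring|]. rewrite IH; ring. Qed.

Lemma sumR_shift n (F : nat -> R) : F n = F O -> sumR n (fun k => F (S k)) = sumR n F.
Proof.
  intros Hper. pose proof (sumR_telescope n F) as Htel.
  rewrite (sumR_ext n _ (fun k => F (S k) + (-1) * F k)) in Htel by (intros; ring).
  rewrite sumR_plus, sumR_scal in Htel. lra.
Qed.

Lemma sumR_nonneg n f : (forall k, (k < n)%nat -> 0 <= f k) -> 0 <= sumR n f.
Proof.
  induction n as [|n IH]; intros Hf; simpl; [lra|].
  assert (0 <= f n) by (apply Hf; lia).
  assert (0 <= sumR n f) by (apply IH; intros; apply Hf; lia). lra.
Qed.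

Lemma sumR_ge_term n f j :
  (j < n)%nat -> (forall k, (k < n)%nat -> 0 <= f k) -> f j <= sumR n f.
Proof.
  induction n as [|n IH]; intros Hj Hf; simpl; [lia|].
  assert (0 <= sumR n f) by (apply sumR_nonneg; intros; apply Hf; lia).
  assert (0 <= f n) by (apply Hf; lia).
  destruct (Nat.eq_dec j n) as [->|Hne]; [lra|].
  assert (f j <= sumR n f) by (apply IH; [lia | intros; apply Hf; lia]). lra.
Qed.

(* If n w is a multiple of 2 pi and w is not, the n-th roots of unity
   e^{i k w} sum to zero; the proof telescopes 2 sin (w/2) cos (k w). *)
Lemma sum_cos_period_zero n j w : sin (w / 2) <> 0 -> INR n * w = 2 * INR j * PI ->
  sumR n (fun k => cos (INR k * w)) = 0.
Proof.
  intros Hs Hnw.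
  pose proof (sumR_telescope n (fun k => sin (INR k * w - w / 2))) as Htel.
  rewrite (sumR_ext n _ (fun k => 2 * sin (w / 2) * cos (INR k * w))) in Htel.
  2: { intros k _. rewrite S_INR.
       replace ((INR k + 1) * w - w / 2) with (INR k * w + w / 2) by lra.
       rewrite sin_plus, sin_minus. ring. }
  rewrite sumR_scal in Htel. simpl INR in Htel.
  replace (INR n * w - w / 2) with (- (w / 2) + 2 * INR j * PI) in Htel by lra.
  rewrite sin_period in Htel. replace (0 * w - w / 2) with (- (w / 2)) in Htel by lra.
  apply (Rmult_eq_reg_l (2 * sin (w / 2))); lra.
Qed.

Lemma sum_sin_period_zero n j w : sin (w / 2) <> 0 -> INR n * w = 2 * INR j * PI ->
  sumR n (fun k => sin (INR k * w)) = 0.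
Proof.
  intros Hs Hnw.
  pose proof (sumR_telescope n (fun k => cos (INR k * w - w / 2))) as Htel.
  rewrite (sumR_ext n _ (fun k => - (2 * sin (w / 2)) * sin (INR k * w))) in Htel.
  2: { intros k _. rewrite S_INR.
       replace ((INR k + 1) * w - w / 2) with (INR k * w + w / 2) by lra.
       rewrite cos_plus, cos_minus. ring. }
  rewrite sumR_scal in Htel. simpl INR in Htel.
  replace (INR n * w - w / 2) with (- (w / 2) + 2 * INR j * PI) in Htel by lra.
  rewrite cos_period in Htel. replace (0 * w - w / 2) with (- (w / 2)) in Htel by lra.
  apply (Rmult_eq_reg_l (- (2 * sin (w / 2)))); lra.
Qed.

Lemma angle_mod n m k : (0 < n)%nat -> exists q : nat,
  2 * PI * INR m * INR k / INR n = 2 * PI * INR m * INR (k mod n) / INR n + 2 * INR q * PI.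
Proof.
  intros Hn. exists (m * (k / n))%nat.
  assert (Hk : k = (n * (k / n) + k mod n)%nat) by (apply Nat.div_mod; lia).
  assert (INR n <> 0) by (apply not_0_INR; lia).
  rewrite Hk at 1. rewrite plus_INR, !mult_INR. field. assumption.
Qed.

Lemma cos_angle_mod n m k : (0 < n)%nat ->
  cos (2 * PI * INR m * INR (k mod n) / INR n) = cos (2 * PI * INR m * INR k / INR n).
Proof. intros Hn. destruct (angle_mod n m k Hn) as [q ->]. now rewrite cos_period. Qed.

Lemma sin_angle_mod n m k : (0 < n)%nat ->
  sin (2 * PI * INR m * INR (k mod n) / INR n) = sin (2 * PI * INR m * INR k / INR n).
Proof. intros Hn. destruct (angle_mod n m k Hn) as [q ->]. now rewrite sin_period. Qed.

Definition mode (n : nat) (A B : R) (k : nat) : R :=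
  A * cos (2 * PI * INR k / INR n) + B * sin (2 * PI * INR k / INR n).

Lemma mode_angle n k : 2 * PI * INR k / INR n = 2 * PI * INR 1 * INR k / INR n.
Proof. simpl INR. unfold Rdiv. ring. Qed.

Lemma mode_mod n A B k : (0 < n)%nat -> mode n A B (k mod n) = mode n A B k.
Proof.
  intros Hn. unfold mode. rewrite !(mode_angle n).
  now rewrite cos_angle_mod, sin_angle_mod.
Qed.

Lemma frac_PI_range c d : 0 < c -> c < d -> 0 < c * PI / d < PI.
Proof.
  intros Hc Hcd. pose proof PI_RGT_0. split.
  - apply Rdiv_lt_0_compat; nra.
  - apply Rmult_lt_reg_r with d; [lra|]. unfold Rdiv. rewrite Rmult_assoc, Rinv_l by lra. nra.
Qed.

Lemma sin_frac_PI_pos c d : 0 < c -> c < d -> 0 < sin (c * PI / d).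
Proof. intros Hc Hcd. destruct (frac_PI_range c d Hc Hcd). now apply sin_gt_0. Qed.

Section FirstMode.
Variables (n : nat) (A B : R).
Hypothesis Hn : (3 <= n)%nat.

Let n_pos : 0 < INR n.
Proof. apply lt_0_INR; lia. Qed.

Let three_le_n : 3 <= INR n.
Proof. replace 3 with (INR 3) by (simpl; lra). apply le_INR; lia. Qed.

Lemma sin_2PI_n_pos : 0 < sin (2 * PI / INR n).
Proof. pose proof three_le_n. apply sin_frac_PI_pos; lra. Qed.

(* sin (pi / n), the half angle needed for the period sums at frequency 1. *)
Let sin_PI_n_nz : sin (2 * PI / INR n / 2) <> 0.
Proof.
  pose proof three_le_n.
  replace (2 * PI / INR n / 2) with (1 * PI / INR n) by (field; lra).
  apply Rgt_not_eq, sin_frac_PI_pos; lra.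
Qed.

Lemma mode_sum_zero : sumR n (mode n A B) = 0.
Proof.
  set (w := 2 * PI / INR n).
  assert (Hw : INR n * w = 2 * INR 1 * PI) by (unfold w; simpl; field; lra).
  unfold mode. rewrite sumR_plus, !sumR_scal.
  rewrite (sumR_ext n _ (fun k => cos (INR k * w))), (sumR_ext n (fun k => sin _) (fun k => sin (INR k * w)))
    by (intros; f_equal; unfold w; field; lra).
  rewrite (sum_cos_period_zero n 1 w sin_PI_n_nz Hw), (sum_sin_period_zero n 1 w sin_PI_n_nz Hw).
  ring.
Qed.

Lemma mode_periodic : mode n A B n = mode n A B O.
Proof.
  unfold mode. simpl INR.
  replace (2 * PI * INR n / INR n) with (0 + 2 * INR 1 * PI) by (simpl; field; lra).
  rewrite cos_period, sin_period. replace (2 * PI * 0 / INR n) with 0 by (field; lra).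
  reflexivity.
Qed.

(* Autocorrelation of the first mode: the cross terms are period sums at
   frequency 2, which vanish. *)
Lemma mode_autocorrelation :
  sumR n (fun k => mode n A B k * mode n A B (S k))
  = cos (2 * PI / INR n) * sumR n (fun k => mode n A B k ^ 2).
Proof.
  pose proof sin_2PI_n_pos. set (w := 2 * PI / INR n).
  assert (Hw2 : INR n * (2 * w) = 2 * INR 2 * PI) by (unfold w; simpl; field; lra).
  assert (Hs2 : sin (2 * w / 2) <> 0) by (replace (2 * w / 2) with w by field; unfold w; lra).
  rewrite (sumR_ext n _ (fun k => cos w * mode n A B k ^ 2
      + sin w * ((B * B - A * A) / 2) * sin (INR k * (2 * w))
      + sin w * (A * B) * cos (INR k * (2 * w)))).
  - rewrite sumR_lincomb3, (sum_cos_period_zero n 2), (sum_sin_period_zero n 2) by assumption.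
    ring.
  - intros k _. unfold mode. rewrite S_INR.
    replace (2 * PI * (INR k + 1) / INR n) with (INR k * w + w) by (unfold w; field; lra).
    replace (2 * PI * INR k / INR n) with (INR k * w) by (unfold w; field; lra).
    replace (INR k * (2 * w)) with (INR k * w + INR k * w) by ring.
    rewrite !cos_plus, !sin_plus. field.
Qed.

(* A nonzero first mode has positive energy: it is nonzero at k = 0 or k = 1. *)
Lemma mode_energy_pos : (A, B) <> (0, 0) -> 0 < sumR n (fun k => mode n A B k ^ 2).
Proof.
  intros HAB.
  assert (Hsq : forall k, (k < n)%nat -> 0 <= mode n A B k ^ 2) by (intros; apply pow2_ge_0).
  destruct (Req_dec A 0) as [HA|HA].
  - assert (HB : B <> 0) by (intros ->; subst; apply HAB; reflexivity).
    assert (Hm1 : mode n A B 1 = B * sin (2 * PI / INR n)).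
    { unfold mode. rewrite HA. simpl INR. replace (2 * PI * 1 / INR n) with (2 * PI / INR n) by (field; lra). ring. }
    pose proof (sumR_ge_term n _ 1 ltac:(lia) Hsq).
    assert (0 < mode n A B 1 ^ 2).
    { apply pow2_gt_0. rewrite Hm1. apply Rmult_integral_contrapositive.
      pose proof sin_2PI_n_pos. split; lra. }
    lra.
  - assert (Hm0 : mode n A B 0 = A).
    { unfold mode. simpl INR. replace (2 * PI * 0 / INR n) with 0 by (field; lra).
      rewrite cos_0, sin_0. ring. }
    pose proof (sumR_ge_term n _ 0 ltac:(lia) Hsq).
    assert (0 < mode n A B 0 ^ 2) by (rewrite Hm0; apply pow2_gt_0; assumption).
    lra.
Qed.

End FirstMode.

Definition cross (u v : R * R) : R := fst u * snd v - snd u * fst v.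

Lemma dot_comm u v : dot u v = dot v u.
Proof. unfold dot; ring. Qed.

Lemma dot_vsub u v w z : dot (vsub u v) (vsub w z) = dot u w - dot u z - dot v w + dot v z.
Proof. unfold dot, vsub; simpl; ring. Qed.

Definition is_vderive (c : R -> R * R) (t : R) (dc : R * R) : Prop :=
  is_derive (fun s => fst (c s)) t (fst dc) /\ is_derive (fun s => snd (c s)) t (snd dc).

Lemma derive_add f g t df dg :
  is_derive f t df -> is_derive g t dg -> is_derive (fun s => f s + g s) t (df + dg).
Proof. intros; now apply (is_derive_plus f g). Qed.

Lemma derive_sub f g t df dg :
  is_derive f t df -> is_derive g t dg -> is_derive (fun s => f s - g s) t (df - dg).
Proof. intros; now apply (is_derive_minus f g). Qed.

Lemma derive_mul f g t df dg :
  is_derive f t df -> is_derive g t dg -> is_derive (fun s => f s * g s) t (df * g t + f t * dg).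
Proof. intros; apply (is_derive_mult f g); auto. intros; apply Rmult_comm. Qed.

Lemma derive_sumR n (F : nat -> R -> R) (dF : nat -> R) t :
  (forall k, (k < n)%nat -> is_derive (F k) t (dF k)) ->
  is_derive (fun s => sumR n (fun k => F k s)) t (sumR n dF).
Proof.
  induction n as [|n IH]; intros HF; simpl.
  - apply (@is_derive_const R_AbsRing R_NormedModule).
  - apply derive_add; [apply IH; intros; apply HF | apply HF]; lia.
Qed.

Lemma derive_locally_constant f t d :
  locally t (fun s => f s = f t) -> is_derive f t d -> d = 0.
Proof.
  intros Hconst Hd. apply is_derive_unique in Hd. rewrite <- Hd.
  apply is_derive_unique, (is_derive_ext_loc (fun _ => f t)).
  - generalize Hconst. apply filter_imp. intros s Hs. now rewrite Hs.
  - apply (@is_derive_const R_AbsRing R_NormedModule).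
Qed.

Lemma vderive_sub c d t dc dd : is_vderive c t dc -> is_vderive d t dd ->
  is_vderive (fun s => vsub (c s) (d s)) t (vsub dc dd).
Proof. intros [Hc1 Hc2] [Hd1 Hd2]. split; simpl; now apply derive_sub. Qed.

Lemma derive_dot c d t dc dd : is_vderive c t dc -> is_vderive d t dd ->
  is_derive (fun s => dot (c s) (d s)) t (dot dc (d t) + dot (c t) dd).
Proof.
  intros [Hc1 Hc2] [Hd1 Hd2]. unfold dot.
  replace (fst dc * fst (d t) + snd dc * snd (d t) + (fst (c t) * fst dd + snd (c t) * snd dd))
    with ((fst dc * fst (d t) + fst (c t) * fst dd) + (snd dc * snd (d t) + snd (c t) * snd dd)) by ring.
  apply derive_add; now apply derive_mul.
Qed.

Lemma derive_cross c d t dc dd : is_vderive c t dc -> is_vderive d t dd ->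
  is_derive (fun s => cross (c s) (d s)) t (cross dc (d t) + cross (c t) dd).
Proof.
  intros [Hc1 Hc2] [Hd1 Hd2]. unfold cross.
  replace (fst dc * snd (d t) - snd dc * fst (d t) + (fst (c t) * snd dd - snd (c t) * fst dd))
    with ((fst dc * snd (d t) + fst (c t) * snd dd) - (snd dc * fst (d t) + snd (c t) * fst dd)) by ring.
  apply derive_sub; now apply derive_mul.
Qed.

Lemma derive_vnorm c t dc : is_vderive c t dc -> 0 < dot (c t) (c t) ->
  is_derive (fun s => vnorm (c s)) t (dot (c t) dc / vnorm (c t)).
Proof.
  intros Hc Hpos. unfold vnorm.
  pose proof (is_derive_sqrt _ t _ (derive_dot c c t dc dc Hc Hc) Hpos) as Hsqrt.
  assert (0 < sqrt (dot (c t) (c t))) by (apply sqrt_lt_R0; assumption).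
  replace (dot (c t) dc / sqrt (dot (c t) (c t)))
    with ((dot dc (c t) + dot (c t) dc) / (2 * sqrt (dot (c t) (c t)))).
  - exact Hsqrt.
  - rewrite (dot_comm dc). field. lra.
Qed.

(* Derivative of <c, d> / |c|; with d = c' this is the second variation of |c|. *)
Lemma derive_dot_over_vnorm c d t dc dd :
  is_vderive c t dc -> is_vderive d t dd -> 0 < dot (c t) (c t) ->
  is_derive (fun s => dot (c s) (d s) / vnorm (c s)) t
    ((dot dc (d t) + dot (c t) dd) / vnorm (c t)
     - dot (c t) (d t) * dot (c t) dc / vnorm (c t) ^ 3).
Proof.
  intros Hc Hd Hpos.
  assert (Hnorm : 0 < vnorm (c t)) by (apply sqrt_lt_R0; assumption).
  pose proof (is_derive_div _ _ t _ _ (derive_dot c d t dc dd Hc Hd) (derive_vnorm c t dc Hc Hpos)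
                (Rgt_not_eq _ _ Hnorm)) as Hdiv.
  simpl in Hdiv.
  replace ((dot dc (d t) + dot (c t) dd) / vnorm (c t) - dot (c t) (d t) * dot (c t) dc / vnorm (c t) ^ 3)
    with (((dot dc (d t) + dot (c t) dd) * vnorm (c t) - dot (c t) (d t) * (dot (c t) dc / vnorm (c t)))
          / (vnorm (c t) ^ 2)) by (field; lra).
  exact Hdiv.
Qed.

Definition circ (a al : R) : R * R := (a * cos al, a * sin al).

Lemma dot_circ a al be : dot (circ a al) (circ a be) = a * a * cos (al - be).
Proof. unfold dot, circ; simpl. rewrite cos_minus. ring. Qed.

Lemma cross_circ a al be : cross (circ a al) (circ a be) = a * a * sin (be - al).
Proof. unfold cross, circ; simpl. rewrite sin_minus. ring. Qed.

(* Gamma_k sits at angle k h on the circle, where h = 2 m pi / n = 2 x. *)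
Definition half_step (n m : nat) : R := INR m * PI / INR n.
Definition step (n m : nat) : R := 2 * PI * INR m / INR n.
Definition phase (n m k : nat) : R := 2 * PI * INR m * INR k / INR n.
Definition side (n m : nat) (a : R) : R := 2 * a * Rabs (sin (half_step n m)).

(* The vertex normal of Gamma is radial: N_k = radial_coeff * Gamma_k. *)
Definition radial_coeff (n m : nat) (a sigma : R) : R :=
  - 2 * sigma * sin (step n m) / (side n m a * (1 + cos (step n m))).

Lemma Gamma_circ n m a k : Gamma n m a k = circ a (phase n m k).
Proof. reflexivity. Qed.

Section PolygonVertices.
Variables (n m : nat) (a : R).
Hypothesis Hn : (0 < n)%nat.

Let n_pos : 0 < INR n.
Proof. apply lt_0_INR; lia. Qed.

Lemma step_double : step n m = 2 * half_step n m.
Proof. unfold step, half_step. field. lra. Qed.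

Lemma phase_succ k : phase n m (S k) = phase n m k + step n m.
Proof. unfold phase, step. rewrite S_INR. field. lra. Qed.

Lemma phase_add_n k : phase n m (k + n) = phase n m k + 2 * INR m * PI.
Proof. unfold phase. rewrite plus_INR. field. lra. Qed.

Lemma Gamma_mod k : Gamma n m a (k mod n) = Gamma n m a k.
Proof. unfold Gamma. now rewrite cos_angle_mod, sin_angle_mod. Qed.

Lemma pt_Gamma q k : (forall j, (j < n)%nat -> q j = Gamma n m a j) -> pt n q k = Gamma n m a k.
Proof. intros Hq. unfold pt. rewrite Hq by (apply Nat.mod_upper_bound; lia). apply Gamma_mod. Qed.

(* The vertex preceding Gamma_k, written without natural-number subtraction. *)
Definition Gamma_prev (k : nat) : R * R := circ a (phase n m k - step n m).

Lemma Gamma_prev_succ k : Gamma_prev (S k) = Gamma n m a k.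
Proof. unfold Gamma_prev. rewrite Gamma_circ, phase_succ. f_equal. ring. Qed.

Lemma Gamma_before k : Gamma n m a (k + n - 1) = Gamma_prev k.
Proof.
  rewrite Gamma_circ. unfold Gamma_prev.
  assert (E : phase n m (k + n - 1) = phase n m k - step n m + 2 * INR m * PI).
  { pose proof (phase_succ (k + n - 1)) as E1. replace (S (k + n - 1)) with (k + n)%nat in E1 by lia.
    rewrite phase_add_n in E1. lra. }
  unfold circ. now rewrite E, cos_period, sin_period.
Qed.

Lemma Gamma_dot_next k : dot (Gamma n m a k) (Gamma n m a (S k)) = a * a * cos (step n m).
Proof.
  rewrite !Gamma_circ, dot_circ, phase_succ.
  replace (phase n m k - (phase n m k + step n m)) with (- step n m) by ring.
  now rewrite cos_neg.
Qed.

Lemma Gamma_cross_next k : cross (Gamma n m a k) (Gamma n m a (S k)) = a * a * sin (step n m).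
Proof.
  rewrite !Gamma_circ, cross_circ, phase_succ.
  now replace (phase n m k + step n m - phase n m k) with (step n m) by ring.
Qed.

Lemma Gamma_dot_self k : dot (Gamma n m a k) (Gamma n m a k) = a * a.
Proof. rewrite Gamma_circ, dot_circ. replace (_ - _) with 0 by ring. rewrite cos_0. ring. Qed.

Lemma Gamma_add_n k : Gamma n m a (k + n) = Gamma n m a k.
Proof. rewrite !Gamma_circ, phase_add_n. unfold circ. now rewrite cos_period, sin_period. Qed.

Lemma Gamma_prev_add_n k : Gamma_prev (k + n) = Gamma_prev k.
Proof.
  unfold Gamma_prev, circ. rewrite phase_add_n.
  replace (phase n m k + 2 * INR m * PI - step n m) with (phase n m k - step n m + 2 * INR m * PI) by ring.
  now rewrite cos_period, sin_period.
Qed.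

Lemma edge_dot_prev_edge k :
  dot (vsub (Gamma n m a (S k)) (Gamma n m a k)) (vsub (Gamma n m a k) (Gamma_prev k))
  = 2 * (a * a) * cos (step n m) * (1 - cos (step n m)).
Proof.
  rewrite dot_vsub. unfold Gamma_prev. rewrite !Gamma_circ, !dot_circ, phase_succ.
  replace (phase n m k + step n m - phase n m k) with (step n m) by ring.
  replace (phase n m k + step n m - (phase n m k - step n m)) with (2 * step n m) by ring.
  replace (phase n m k - phase n m k) with 0 by ring.
  replace (phase n m k - (phase n m k - step n m)) with (step n m) by ring.
  rewrite cos_0, cos_2a_cos. ring.
Qed.

End PolygonVertices.

Section RegularPolygon.
Variables (n m : nat) (a : R).
Hypotheses (Hn : (0 < n)%nat) (Hm : (1 <= m <= n - 1)%nat) (Ha : 0 < a).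

Let n_pos : 0 < INR n.
Proof. apply lt_0_INR; lia. Qed.

Lemma sin_half_step_pos : 0 < sin (half_step n m).
Proof.
  apply sin_frac_PI_pos.
  - apply lt_0_INR; lia.
  - apply lt_INR; lia.
Qed.

(* 2 m <> n is exactly what keeps h away from pi. *)
Lemma cos_half_step_nz : (2 * m <> n)%nat -> cos (half_step n m) <> 0.
Proof.
  intros H2m.
  assert (Hrange : 0 < half_step n m < PI)
    by (apply frac_PI_range; [apply lt_0_INR; lia | apply lt_INR; lia]).
  assert (Hmid : half_step n m <> PI / 2).
  { unfold half_step. intros E. apply H2m, INR_eq. rewrite mult_INR. simpl INR.
    pose proof PI_RGT_0.
    assert (E2 : INR m * PI = PI / 2 * INR n) by (rewrite <- E; field; lra).
    assert (E3 : PI * (2 * INR m - INR n) = 0) by lra.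
    apply Rmult_integral in E3. destruct E3; lra. }
  destruct (Rlt_or_le (half_step n m) (PI / 2)).
  - pose proof (cos_gt_0 (half_step n m) ltac:(lra) H). lra.
  - pose proof (cos_lt_0 (half_step n m) ltac:(lra) ltac:(lra)). lra.
Qed.

Lemma sin_step_nz : (2 * m <> n)%nat -> sin (step n m) <> 0.
Proof.
  intros H2m. rewrite (step_double n m Hn), sin_2a.
  pose proof sin_half_step_pos. pose proof (cos_half_step_nz H2m).
  intros E. apply Rmult_integral in E. destruct E as [E|E]; [lra | contradiction].
Qed.

Lemma one_plus_cos_step_nz : (2 * m <> n)%nat -> 1 + cos (step n m) <> 0.
Proof. intros H2m. rewrite (step_double n m Hn), cos_2a_cos. pose proof (cos_half_step_nz H2m). nra. Qed.

Lemma one_minus_cos_step_pos : 0 < 1 - cos (step n m).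
Proof. rewrite (step_double n m Hn), cos_2a_sin. pose proof sin_half_step_pos. nra. Qed.

Lemma side_pos : 0 < side n m a.
Proof. unfold side. pose proof sin_half_step_pos. rewrite Rabs_right by lra. nra. Qed.

Lemma side_sq_half : side n m a * side n m a = 4 * (a * a) * (sin (half_step n m) * sin (half_step n m)).
Proof. unfold side. pose proof sin_half_step_pos. rewrite Rabs_right by lra. ring. Qed.

Lemma side_sq : side n m a * side n m a = 2 * (a * a) * (1 - cos (step n m)).
Proof. rewrite side_sq_half, (step_double n m Hn), cos_2a_sin. ring. Qed.

Lemma edge_len_Gamma q k : (forall j, (j < n)%nat -> q j = Gamma n m a j) ->
  edge_len n q k = side n m a.
Proof.
  intros Hq. unfold edge_len, vnorm. rewrite !(pt_Gamma n m a Hn) by assumption.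
  rewrite dot_vsub, !Gamma_dot_self, (dot_comm (Gamma n m a (S k))), (Gamma_dot_next n m a Hn).
  replace (a * a - a * a * cos (step n m) - a * a * cos (step n m) + a * a)
    with (side n m a * side n m a) by (rewrite side_sq; ring).
  apply sqrt_square. pose proof side_pos. lra.
Qed.

Lemma edge_normal_Gamma sigma q k : (forall j, (j < n)%nat -> q j = Gamma n m a j) ->
  edge_normal sigma n q k
  = rotq sigma (vscale (/ side n m a) (vsub (Gamma n m a (S k)) (Gamma n m a k))).
Proof. intros Hq. unfold edge_normal. rewrite edge_len_Gamma, !(pt_Gamma n m a Hn) by assumption. reflexivity. Qed.

Lemma edge_normal_before sigma q k : (forall j, (j < n)%nat -> q j = Gamma n m a j) ->
  edge_normal sigma n q (k + n - 1)
  = rotq sigma (vscale (/ side n m a) (vsub (Gamma n m a k) (Gamma_prev n m a k))).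
Proof.
  intros Hq. unfold edge_normal. rewrite edge_len_Gamma, !(pt_Gamma n m a Hn) by assumption.
  replace (S (k + n - 1)) with (k + n)%nat by lia.
  now rewrite (Gamma_add_n n m a Hn), (Gamma_before n m a Hn).
Qed.

Lemma cos_angle_Gamma sigma q k : sigma * sigma = 1 ->
  (forall j, (j < n)%nat -> q j = Gamma n m a j) ->
  cos_angle sigma n q k = cos (step n m).
Proof.
  intros Hsig Hq. unfold cos_angle. rewrite edge_normal_Gamma, edge_normal_before by assumption.
  pose proof side_pos. pose proof one_minus_cos_step_pos.
  transitivity (sigma * sigma / (side n m a * side n m a)
    * dot (vsub (Gamma n m a (S k)) (Gamma n m a k)) (vsub (Gamma n m a k) (Gamma_prev n m a k))).
  - unfold dot, rotq, vscale; simpl. field. lra.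
  - rewrite (edge_dot_prev_edge n m a Hn), Hsig, side_sq. field. split; lra.
Qed.

Lemma vertex_normal_Gamma sigma q k : (2 * m <> n)%nat -> sigma * sigma = 1 ->
  (forall j, (j < n)%nat -> q j = Gamma n m a j) ->
  vertex_normal sigma n q k = vscale (radial_coeff n m a sigma) (Gamma n m a k).
Proof.
  intros H2m Hsig Hq. pose proof side_pos. pose proof (one_plus_cos_step_nz H2m).
  unfold vertex_normal. rewrite cos_angle_Gamma, edge_normal_Gamma, edge_normal_before by assumption.
  unfold Gamma_prev, radial_coeff. rewrite !Gamma_circ, (phase_succ n m Hn).
  unfold vadd, vscale, rotq, vsub, circ; simpl.
  rewrite sin_plus, cos_plus, sin_minus, cos_minus. f_equal; field; split; lra.
Qed.

Lemma radial_coeff_sq sigma : (2 * m <> n)%nat -> sigma * sigma = 1 ->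
  radial_coeff n m a sigma * radial_coeff n m a sigma = / (a * a * (cos (half_step n m) * cos (half_step n m))).
Proof.
  intros H2m Hsig. pose proof side_pos. pose proof sin_half_step_pos. pose proof (cos_half_step_nz H2m).
  pose proof (one_plus_cos_step_nz H2m).
  unfold radial_coeff.
  transitivity (4 * (sigma * sigma) * (sin (step n m) * sin (step n m))
                / ((side n m a * side n m a) * ((1 + cos (step n m)) * (1 + cos (step n m))))).
  { field. split; lra. }
  assert (0 < cos (half_step n m) * cos (half_step n m)) by (apply Rsqr_pos_lt; assumption).
  rewrite Hsig, side_sq_half, (step_double n m Hn), sin_2a, cos_2a_cos.
  field. repeat split; lra.
Qed.

(* The second difference of Gamma is radial and its first central difference
   is tangential, so e_k - e_{k-1} is read off from cross products with the
   neighbours; K = (1 - cos h) / sin h = tan x. *)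
Lemma edge_turning_identity k u : (2 * m <> n)%nat ->
  dot (vsub (Gamma n m a (S k)) (Gamma n m a k)) u
    + (1 - cos (step n m)) / sin (step n m) * cross u (Gamma n m a (S k))
  = dot (vsub (Gamma n m a k) (Gamma_prev n m a k)) u
    + (1 - cos (step n m)) / sin (step n m) * cross u (Gamma_prev n m a k).
Proof.
  intros H2m. pose proof (sin_step_nz H2m). unfold Gamma_prev. rewrite !Gamma_circ, (phase_succ n m Hn).
  unfold dot, cross, vsub, circ; simpl.
  rewrite sin_plus, cos_plus, sin_minus, cos_minus. field. assumption.
Qed.

Lemma summation_by_parts_Gamma (u : nat -> R * R) : (2 * m <> n)%nat -> u n = u O ->
  sumR n (fun k => dot (vsub (Gamma n m a (S k)) (Gamma n m a k)) (vsub (u (S k)) (u k)))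
  = (1 - cos (step n m)) / sin (step n m)
    * sumR n (fun k => cross (u k) (Gamma n m a (S k)) + cross (Gamma n m a k) (u (S k))).
Proof.
  intros H2m Hper. set (K := (1 - cos (step n m)) / sin (step n m)).
  set (H := fun j => dot (vsub (Gamma n m a j) (Gamma_prev n m a j)) (u j) + K * cross (u j) (Gamma_prev n m a j)).
  assert (Htel : sumR n (fun k => H (S k) - H k) = 0).
  { rewrite sumR_telescope. unfold H.
    rewrite (Gamma_add_n n m a Hn O : Gamma n m a n = _), (Gamma_prev_add_n n m a Hn O : Gamma_prev n m a n = _), Hper.
    ring. }
  rewrite (sumR_ext n _ (fun k => (H (S k) - H k) + K * (cross (u k) (Gamma n m a (S k))
                                                  + cross (Gamma n m a k) (u (S k))))) by
    (intros k _; unfold H, K; rewrite (Gamma_prev_succ n m a Hn), <- (edge_turning_identity k (u k) H2m);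
     unfold dot, cross, vsub; simpl; ring).
  rewrite sumR_plus, sumR_scal, Htel. ring.
Qed.

End RegularPolygon.

Lemma locally_interval eps t : - eps < t < eps -> locally t (fun s => - eps < s < eps).
Proof.
  intros Ht. assert (Hr : 0 < Rmin (eps - t) (t + eps)) by (apply Rmin_pos; lra).
  exists (mkposreal _ Hr). intros s Hs. unfold ball in Hs; simpl in Hs.
  unfold AbsRing_ball, abs, minus, plus, opp in Hs; simpl in Hs. apply Rabs_def2 in Hs.
  pose proof (Rmin_l (eps - t) (t + eps)). pose proof (Rmin_r (eps - t) (t + eps)). lra.
Qed.

Section Variation.
Variables (n : nat) (eps : R) (p : R -> nat -> R * R).
Hypotheses (Hn : (0 < n)%nat) (Heps : 0 < eps)
  (HC2 : forall k, (k < n)%nat -> C2_on eps (fun t => fst (p t k)) /\ C2_on eps (fun t => snd (p t k)))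
  (Hcl : forall t, - eps < t < eps -> closed_curve n (p t)).

Definition pos (k : nat) (t : R) : R * R := pt n (p t) k.
Definition vel (k : nat) (t : R) : R * R :=
  (Derive (fun s => fst (pos k s)) t, Derive (fun s => snd (pos k s)) t).
Definition acc (k : nat) : R * R :=
  (Derive (fun s => fst (vel k s)) 0, Derive (fun s => snd (vel k s)) 0).
Definition edge (k : nat) (t : R) : R * R := vsub (pos (S k) t) (pos k t).
Definition edge_vel (k : nat) (t : R) : R * R := vsub (vel (S k) t) (vel k t).
Definition edge_acc (k : nat) : R * R := vsub (acc (S k)) (acc k).

Let zero_in : - eps < 0 < eps.
Proof. lra. Qed.

Let mod_lt k : (k mod n < n)%nat.
Proof. apply Nat.mod_upper_bound; lia. Qed.

Lemma pos_vderive k t : - eps < t < eps -> is_vderive (pos k) t (vel k t).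
Proof.
  intros Ht. destruct (HC2 _ (mod_lt k)) as [Hx Hy].
  split; apply Derive_correct; [apply (Hx t Ht) | apply (Hy t Ht)].
Qed.

Lemma vel_vderive k : is_vderive (vel k) 0 (acc k).
Proof.
  destruct (HC2 _ (mod_lt k)) as [Hx Hy].
  split; apply Derive_correct; [apply (Hx 0 zero_in) | apply (Hy 0 zero_in)].
Qed.

Lemma edge_vderive k t : - eps < t < eps -> is_vderive (edge k) t (edge_vel k t).
Proof. intros Ht. apply vderive_sub; now apply pos_vderive. Qed.

Lemma edge_vel_vderive k : is_vderive (edge_vel k) 0 (edge_acc k).
Proof. apply vderive_sub; apply vel_vderive. Qed.

Lemma edge_sq_pos k t : - eps < t < eps -> (k < n)%nat -> 0 < dot (edge k t) (edge k t).
Proof.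
  intros Ht Hk. destruct (Hcl t Ht) as [_ Hne]. specialize (Hne k Hk).
  assert (Hsq : 0 <= dot (edge k t) (edge k t))
    by (unfold dot; apply Rplus_le_le_0_compat; apply Rle_0_sqr).
  destruct Hsq as [Hsq|Hsq]; [exact Hsq|].
  exfalso. apply Hne. unfold edge_len, vnorm. change (sqrt (dot (edge k t) (edge k t)) = 0).
  rewrite <- Hsq. apply sqrt_0.
Qed.

Definition length_velocity (t : R) : R :=
  sumR n (fun k => dot (edge k t) (edge_vel k t) / vnorm (edge k t)).

Definition length_acceleration : R :=
  sumR n (fun k => (dot (edge_vel k 0) (edge_vel k 0) + dot (edge k 0) (edge_acc k)) / vnorm (edge k 0)
                   - dot (edge k 0) (edge_vel k 0) * dot (edge k 0) (edge_vel k 0) / vnorm (edge k 0) ^ 3).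

Lemma derive_length t : - eps < t < eps ->
  is_derive (fun s => Len n (p s)) t (length_velocity t).
Proof.
  intros Ht. apply (derive_sumR n (fun k s => vnorm (edge k s))). intros k Hk.
  apply derive_vnorm; [now apply edge_vderive | now apply edge_sq_pos].
Qed.

Lemma length_second_derivative : is_derive_n (fun t => Len n (p t)) 2 0 length_acceleration.
Proof.
  simpl. apply (is_derive_ext_loc length_velocity).
  - generalize (locally_interval eps 0 zero_in). apply filter_imp. intros s Hs.
    symmetry. apply is_derive_unique, derive_length, Hs.
  - apply (derive_sumR n (fun k s => dot (edge k s) (edge_vel k s) / vnorm (edge k s))).
    intros k Hk. apply derive_dot_over_vnorm.
    + now apply edge_vderive.
    + apply edge_vel_vderive.
    + now apply edge_sq_pos.
Qed.

Lemma pos_periodic t : pos n t = pos O t.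
Proof. unfold pos, pt. now rewrite Nat.Div0.mod_same, Nat.Div0.mod_0_l. Qed.

Lemma vel_periodic t : vel n t = vel O t.
Proof. unfold vel. f_equal; apply Derive_ext; intros; now rewrite pos_periodic. Qed.

Lemma acc_periodic : acc n = acc O.
Proof. unfold acc. f_equal; apply Derive_ext; intros; now rewrite vel_periodic. Qed.

(* Twice the signed area, by the shoelace formula. *)
Definition shoelace (t : R) : R := sumR n (fun k => cross (pos k t) (pos (S k) t)).

Lemma Vol_shoelace sigma t : - eps < t < eps -> Vol sigma n (p t) = - sigma / 2 * shoelace t.
Proof.
  intros Ht. destruct (Hcl t Ht) as [_ Hne]. unfold Vol, shoelace.
  rewrite (sumR_ext n _ (fun k => - sigma * cross (pos k t) (pos (S k) t))), sumR_scal.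
  - field.
  - intros k Hk. specialize (Hne k Hk).
    unfold edge_normal, rotq, vscale, vsub, dot, cross, pos; simpl. field. exact Hne.
Qed.

Definition shoelace_velocity (t : R) : R :=
  sumR n (fun k => cross (vel k t) (pos (S k) t) + cross (pos k t) (vel (S k) t)).

Lemma derive_shoelace t : - eps < t < eps -> is_derive shoelace t (shoelace_velocity t).
Proof.
  intros Ht. apply (derive_sumR n (fun k s => cross (pos k s) (pos (S k) s))).
  intros k _. apply derive_cross; now apply pos_vderive.
Qed.

Lemma derive_shoelace_velocity :
  is_derive shoelace_velocity 0
    (sumR n (fun k => cross (acc k) (pos (S k) 0) + cross (vel k 0) (vel (S k) 0)
                      + (cross (vel k 0) (vel (S k) 0) + cross (pos k 0) (acc (S k))))).
Proof.
  apply (derive_sumR n (fun k s => cross (vel k s) (pos (S k) s) + cross (pos k s) (vel (S k) s))).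
  intros k _. apply derive_add; apply derive_cross.
  - exact (vel_vderive k).
  - exact (pos_vderive (S k) 0 zero_in).
  - exact (pos_vderive k 0 zero_in).
  - exact (vel_vderive (S k)).
Qed.

Lemma area_constraint sigma : sigma <> 0 ->
  (forall t, - eps < t < eps -> Vol sigma n (p t) = Vol sigma n (p 0)) ->
  sumR n (fun k => cross (acc k) (pos (S k) 0) + cross (pos k 0) (acc (S k)))
  = -2 * sumR n (fun k => cross (vel k 0) (vel (S k) 0)).
Proof.
  intros Hsig HV.
  assert (Hconst : forall t, - eps < t < eps -> shoelace t = shoelace 0).
  { intros t Ht. pose proof (HV t Ht) as E. rewrite !Vol_shoelace in E by assumption.
    apply (Rmult_eq_reg_l (- sigma / 2)); [exact E | intros H; apply Hsig; lra]. }
  assert (Hvel : forall t, - eps < t < eps -> shoelace_velocity t = 0).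
  { intros t Ht. apply (derive_locally_constant shoelace t).
    - generalize (locally_interval eps t Ht). apply filter_imp. intros s Hs.
      now rewrite (Hconst s Hs), (Hconst t Ht).
    - now apply derive_shoelace. }
  assert (Hzero := derive_locally_constant shoelace_velocity 0 _
    (filter_imp _ _ (fun s Hs => eq_trans (Hvel s Hs) (eq_sym (Hvel 0 zero_in)))
       (locally_interval eps 0 zero_in))
    derive_shoelace_velocity).
  rewrite (sumR_ext n _ (fun k => (cross (acc k) (pos (S k) 0) + cross (pos k 0) (acc (S k)))
                                  + 2 * cross (vel k 0) (vel (S k) 0))) in Hzero by (intros; ring).
  rewrite sumR_plus, sumR_scal in Hzero. lra.
Qed.

End Variation.

Section AtGamma.
Variables (n m : nat) (a A B sigma eps : R) (p : R -> nat -> R * R).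
Hypotheses (Hn : (3 <= n)%nat) (Hm : (1 <= m <= n - 1)%nat) (H2m : (2 * m <> n)%nat) (Ha : 0 < a)
  (Hsig : sigma * sigma = 1) (Heps : 0 < eps)
  (HC2 : forall k, (k < n)%nat -> C2_on eps (fun t => fst (p t k)) /\ C2_on eps (fun t => snd (p t k)))
  (Hcl : forall t, - eps < t < eps -> closed_curve n (p t))
  (HV : forall t, - eps < t < eps -> Vol sigma n (p t) = Vol sigma n (p 0))
  (H0 : forall k, (k < n)%nat -> p 0 k = Gamma n m a k)
  (Hd : forall k, (k < n)%nat ->
        is_derive (fun t => fst (p t k)) 0 (mode n A B k * fst (vertex_normal sigma n (p 0) k)) /\
        is_derive (fun t => snd (p t k)) 0 (mode n A B k * snd (vertex_normal sigma n (p 0) k))).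

Let n_pos : (0 < n)%nat.
Proof. lia. Qed.

Let c := radial_coeff n m a sigma.
Let C := cos (step n m).
Let psi := mode n A B.
Let Q := sumR n (fun k => psi k ^ 2).
Let Pc := sumR n (fun k => psi k * psi (S k)).

Lemma pos_at_zero k : pos n p k 0 = Gamma n m a k.
Proof. apply pt_Gamma; assumption. Qed.

Lemma vel_at_zero k : vel n p k 0 = vscale (c * psi k) (Gamma n m a k).
Proof.
  assert (Hk : (k mod n < n)%nat) by (apply Nat.mod_upper_bound; lia).
  destruct (Hd _ Hk) as [Hx Hy]. apply is_derive_unique in Hx, Hy.
  transitivity (mode n A B (k mod n) * fst (vertex_normal sigma n (p 0) (k mod n)),
                mode n A B (k mod n) * snd (vertex_normal sigma n (p 0) (k mod n))).
  { unfold vel, pos, pt. now rewrite <- Hx, <- Hy. }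
  rewrite (vertex_normal_Gamma n m a) by assumption.
  rewrite Gamma_mod, mode_mod by assumption. unfold vscale; simpl. fold psi c. f_equal; ring.
Qed.

Lemma edge_norm_at_zero k : vnorm (edge n p k 0) = side n m a.
Proof. apply (edge_len_Gamma n m a); assumption. Qed.

Lemma edge_vel_sq_at_zero k :
  dot (edge_vel n p k 0) (edge_vel n p k 0)
  = c * c * (a * a) * psi k ^ 2 + c * c * (a * a) * psi (S k) ^ 2 + (- 2 * c * c * (a * a) * C) * (psi k * psi (S k)).
Proof.
  unfold edge_vel. rewrite !vel_at_zero.
  transitivity (c * c * (psi (S k) ^ 2 * dot (Gamma n m a (S k)) (Gamma n m a (S k))
    + psi k ^ 2 * dot (Gamma n m a k) (Gamma n m a k) - 2 * psi k * psi (S k) * dot (Gamma n m a k) (Gamma n m a (S k)))).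
  - unfold dot, vsub, vscale; simpl; ring.
  - rewrite !Gamma_dot_self, Gamma_dot_next by assumption. fold C. ring.
Qed.

Lemma edge_dot_edge_vel_at_zero k :
  dot (edge n p k 0) (edge_vel n p k 0) = c * (a * a) * (1 - C) * (psi k + psi (S k)).
Proof.
  unfold edge, edge_vel. rewrite !vel_at_zero, !pos_at_zero.
  transitivity (c * (psi (S k) * dot (Gamma n m a (S k)) (Gamma n m a (S k))
    + psi k * dot (Gamma n m a k) (Gamma n m a k) - (psi k + psi (S k)) * dot (Gamma n m a k) (Gamma n m a (S k)))).
  - unfold dot, vsub, vscale; simpl; ring.
  - rewrite !Gamma_dot_self, Gamma_dot_next by assumption. fold C. ring.
Qed.

Lemma vel_cross_at_zero k :
  cross (vel n p k 0) (vel n p (S k) 0) = c * c * (a * a) * sin (step n m) * (psi k * psi (S k)).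
Proof.
  rewrite !vel_at_zero.
  transitivity (c * c * (psi k * psi (S k)) * cross (Gamma n m a k) (Gamma n m a (S k))).
  - unfold cross, vscale; simpl; ring.
  - rewrite Gamma_cross_next by assumption. ring.
Qed.

Lemma shifted_energy : sumR n (fun k => psi (S k) ^ 2) = Q.
Proof. apply (sumR_shift n (fun k => psi k ^ 2)). unfold psi. now rewrite mode_periodic. Qed.

Lemma quadratic_form_sum al be :
  sumR n (fun k => al * psi k ^ 2 + al * psi (S k) ^ 2 + be * (psi k * psi (S k)))
  = 2 * al * Q + be * Pc.
Proof. rewrite sumR_lincomb3, shifted_energy. fold Q Pc. ring. Qed.

(* The accelerations are eliminated by summation by parts and the area
   constraint. *)
Lemma sum_edge_dot_edge_acc :
  sumR n (fun k => dot (edge n p k 0) (edge_acc n p k)) = - 2 * c * c * (a * a) * (1 - C) * Pc.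
Proof.
  assert (Hs : sin (step n m) <> 0) by (apply sin_step_nz; assumption).
  rewrite (sumR_ext n _ (fun k => dot (vsub (Gamma n m a (S k)) (Gamma n m a k)) (vsub (acc n p (S k)) (acc n p k))))
    by (intros; unfold edge, edge_acc; now rewrite !pos_at_zero).
  rewrite summation_by_parts_Gamma by (try apply acc_periodic; assumption).
  rewrite (sumR_ext n _ (fun k => cross (acc n p k) (pos n p (S k) 0) + cross (pos n p k 0) (acc n p (S k))))
    by (intros; now rewrite !pos_at_zero).
  rewrite (area_constraint n eps p n_pos Heps HC2 Hcl sigma) by (try assumption; intros ->; lra).
  rewrite (sumR_ext n _ (fun k => c * c * (a * a) * sin (step n m) * (psi k * psi (S k))))
    by (intros; apply vel_cross_at_zero).
  rewrite sumR_scal. fold Pc C. field. assumption.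
Qed.

Lemma second_variation_Gamma :
  length_acceleration n p
  = c * c * (a * a) / side n m a * ((1 + C) - (3 - C) * cos (2 * PI / INR n)) * Q.
Proof.
  assert (HL : 0 < side n m a) by (apply side_pos; assumption).
  assert (HL2 : side n m a * side n m a = 2 * (a * a) * (1 - C)) by (apply side_sq; assumption).
  assert (HC : 0 < 1 - C) by (apply one_minus_cos_step_pos; assumption).
  set (L := side n m a) in *.
  unfold length_acceleration.
  rewrite (sumR_ext n _ (fun k => / L * dot (edge_vel n p k 0) (edge_vel n p k 0)
      + / L * dot (edge n p k 0) (edge_acc n p k)
      + (- / L ^ 3) * (dot (edge n p k 0) (edge_vel n p k 0) * dot (edge n p k 0) (edge_vel n p k 0))))
    by (intros; rewrite edge_norm_at_zero; fold L; field; lra).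
  rewrite sumR_lincomb3, sum_edge_dot_edge_acc.
  rewrite (sumR_ext n _ (fun k => c * c * (a * a) * psi k ^ 2 + c * c * (a * a) * psi (S k) ^ 2
      + (- 2 * c * c * (a * a) * C) * (psi k * psi (S k)))) by (intros; apply edge_vel_sq_at_zero).
  set (K2 := (c * (a * a) * (1 - C)) ^ 2).
  rewrite (sumR_ext n (fun k => _ * _) (fun k => K2 * psi k ^ 2 + K2 * psi (S k) ^ 2 + (2 * K2) * (psi k * psi (S k))))
    by (intros; rewrite edge_dot_edge_vel_at_zero; unfold K2; ring).
  rewrite !quadratic_form_sum. unfold Pc, psi. rewrite mode_autocorrelation by assumption. fold psi Q.
  replace (L ^ 3) with (L * (2 * (a * a) * (1 - C))) by (rewrite <- HL2; ring).
  unfold K2. field. split; lra.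
Qed.

Lemma length_acceleration_Gamma :
  length_acceleration n p
  = 4 / side n m a * (sin (PI / INR n) ^ 2 - cos (2 * PI / INR n) * tan (INR m * PI / INR n) ^ 2) * Q.
Proof.
  assert (Hn' : 0 < INR n) by (apply lt_0_INR; lia).
  assert (HL : 0 < side n m a) by (apply side_pos; assumption).
  assert (Hs := sin_half_step_pos n m n_pos Hm).
  assert (Hco := cos_half_step_nz n m n_pos Hm H2m).
  rewrite second_variation_Gamma. unfold c. rewrite radial_coeff_sq by assumption.
  unfold C. rewrite (step_double n m n_pos), cos_2a_cos.
  replace (2 * PI / INR n) with (2 * (PI / INR n)) by (field; lra).
  rewrite cos_2a_sin. change (INR m * PI / INR n) with (half_step n m). unfold tan.
  assert (Hpy := sin2_cos2 (half_step n m)). unfold Rsqr in Hpy.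
  replace ((sin (half_step n m) / cos (half_step n m)) ^ 2)
    with ((1 - cos (half_step n m) * cos (half_step n m)) / (cos (half_step n m) * cos (half_step n m)))
    by (replace (1 - cos (half_step n m) * cos (half_step n m)) with (sin (half_step n m) * sin (half_step n m)) by lra;
        field; assumption).
  field. repeat split; lra.
Qed.

End AtGamma.

Definition stability_coeff (n m : nat) : R :=
  sin (PI / INR n) ^ 2 - cos (2 * PI / INR n) * tan (INR m * PI / INR n) ^ 2.

Lemma small_angle n : (5 <= n)%nat -> 0 < PI / INR n /\ 2 * (PI / INR n) < PI / 2.
Proof.
  intros Hn. assert (H5 : 5 <= INR n) by (replace 5 with (INR 5) by (simpl; lra); apply le_INR; lia).
  pose proof PI_RGT_0. split; [apply Rdiv_lt_0_compat; lra|].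
  apply Rmult_lt_reg_r with (INR n); [lra|]. unfold Rdiv. field_simplify; [|lra]. nra.
Qed.

(* For m = 1 or m = n - 1 the coefficient equals sin^4 y / cos^2 y. *)
Lemma stability_coeff_nonneg n m : (5 <= n)%nat -> (m = 1 \/ m = n - 1)%nat ->
  0 <= stability_coeff n m.
Proof.
  intros Hn Hm. destruct (small_angle n Hn) as [Hy1 Hy2]. pose proof PI_RGT_0.
  assert (INR n <> 0) by (apply not_0_INR; lia).
  unfold stability_coeff. set (y := PI / INR n) in *.
  assert (Hco : 0 < cos y) by (apply cos_gt_0; lra).
  assert (Hg : cos (2 * PI / INR n) = cos y * cos y - sin y * sin y).
  { replace (2 * PI / INR n) with (2 * y) by (unfold y; field; assumption). apply cos_2a. }
  assert (Ht : tan (INR m * PI / INR n) ^ 2 = (sin y / cos y) ^ 2).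
  { destruct Hm as [-> | ->].
    - replace (INR 1 * PI / INR n) with y by (simpl; unfold y; field; assumption). reflexivity.
    - rewrite minus_INR by lia. simpl INR.
      replace ((INR n - 1) * PI / INR n) with (PI - y) by (unfold y; field; assumption).
      unfold tan. rewrite sin_PI_x, Rtrigo_facts.cos_pi_minus. field. lra. }
  rewrite Hg, Ht.
  replace (sin y ^ 2 - (cos y * cos y - sin y * sin y) * (sin y / cos y) ^ 2)
    with ((sin y ^ 2) ^ 2 / cos y ^ 2) by (field; lra).
  unfold Rdiv. apply Rmult_le_pos; [apply pow2_ge_0 | left; apply Rinv_0_lt_compat, pow_lt; lra].
Qed.

Lemma half_step_bounds n m : (5 <= n)%nat -> (2 <= m <= n - 2)%nat ->
  2 * (PI / INR n) <= half_step n m <= PI - 2 * (PI / INR n).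
Proof.
  intros Hn Hm. pose proof PI_RGT_0.
  assert (Hnpos : 0 < INR n) by (apply lt_0_INR; lia).
  assert (Hinv : 0 <= / INR n) by (left; apply Rinv_0_lt_compat; lra).
  assert (2 <= INR m) by (replace 2 with (INR 2) by (simpl; lra); apply le_INR; lia).
  assert (INR m <= INR n - 2).
  { replace 2 with (INR 2) by (simpl; lra). rewrite <- minus_INR by lia. apply le_INR; lia. }
  unfold half_step, Rdiv. split.
  - rewrite <- Rmult_assoc. apply Rmult_le_compat_r; [assumption | nra].
  - replace (PI - 2 * (PI * / INR n)) with ((INR n - 2) * PI * / INR n) by (field; lra).
    apply Rmult_le_compat_r; [assumption | nra].
Qed.

(* Hence cos^2 x <= cos^2 (2 y), which forces the coefficient below zero. *)
Lemma stability_coeff_neg n m : (5 <= n)%nat -> (2 <= m <= n - 2)%nat -> (2 * m <> n)%nat ->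
  stability_coeff n m < 0.
Proof.
  intros Hn Hm H2m. destruct (small_angle n Hn) as [Hy1 Hy2]. pose proof PI_RGT_0.
  assert (Hnpos : 0 < INR n) by (apply lt_0_INR; lia).
  assert (Hu0 : cos (half_step n m) <> 0) by (apply cos_half_step_nz; lia).
  unfold stability_coeff. change (INR m * PI / INR n) with (half_step n m).
  set (y := PI / INR n) in *. set (x := half_step n m) in *.
  destruct (half_step_bounds n m Hn Hm) as [Hxl Hxr]. fold y x in Hxl, Hxr.
  set (g := cos (2 * PI / INR n)).
  assert (Hg2 : g = cos (2 * y)) by (unfold g, y; f_equal; field; lra).
  assert (Hgpos : 0 < g) by (rewrite Hg2; apply cos_gt_0; lra).
  assert (Hsy : 0 < sin y) by (apply sin_gt_0; lra).
  assert (Hgs : g = 1 - 2 * sin y * sin y) by (rewrite Hg2; apply cos_2a_sin).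
  assert (Hg1 : g < 1) by nra.
  set (u := cos x).
  assert (Hu1 : u <= g) by (rewrite Hg2; unfold u; apply cos_decr_1; lra).
  assert (Hu2 : - g <= u).
  { rewrite Hg2, <- Rtrigo_facts.cos_pi_minus. unfold u. apply cos_decr_1; lra. }
  assert (Huu : u * u <= g * g) by nra.
  assert (Hupos : 0 < u * u) by (apply Rsqr_pos_lt; assumption).
  assert (Ht : tan x ^ 2 = (1 - u * u) / (u * u)).
  { unfold u, tan. pose proof (sin2_cos2 x) as Hpy. unfold Rsqr in Hpy.
    replace (1 - cos x * cos x) with (sin x * sin x) by lra. field. assumption. }
  assert (Hss : sin y ^ 2 = (1 - g) / 2) by (rewrite Hgs; field).
  rewrite Ht, Hss.
  replace ((1 - g) / 2 - g * ((1 - u * u) / (u * u)))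
    with (((1 - g) / 2 * (u * u) - g * (1 - u * u)) / (u * u)) by (unfold u; field; assumption).
  assert (u * u * (1 + g) <= g * g * (1 + g)) by (apply Rmult_le_compat_r; lra).
  assert (g * g * (1 + g) - 2 * g < 0) by nra.
  assert ((1 - g) / 2 * (u * u) - g * (1 - u * u) < 0) by nra.
  apply (Rmult_lt_reg_r (u * u)); [assumption|]. rewrite Rmult_0_l.
  unfold Rdiv. rewrite Rmult_assoc, Rinv_l by lra. lra.
Qed.

Theorem mainTheorem16 (n m : nat) (a A B sigma : R) :
  (5 <= n)%nat -> (1 <= m <= n - 1)%nat -> (2 * m <> n)%nat -> 0 < a ->
  (sigma = 1 \/ sigma = -1) ->
  let l0 := 2 * a * Rabs (sin (INR m * PI / INR n)) in
  let psi := fun k : nat => A * cos (2 * PI * INR k / INR n) + B * sin (2 * PI * INR k / INR n) in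
  let val := 4 / l0 * (sin (PI / INR n) ^ 2 - cos (2 * PI / INR n) * tan (INR m * PI / INR n) ^ 2)
             * sumR n (fun k => psi k ^ 2) in
  (forall k, (k < n)%nat -> edge_len n (Gamma n m a) k = l0) /\
  sumR n psi = 0 /\
  (forall (p : R -> nat -> R * R) (eps : R), 0 < eps ->
     (forall k, (k < n)%nat ->
        C2_on eps (fun t => fst (p t k)) /\ C2_on eps (fun t => snd (p t k))) ->
     (forall t, - eps < t < eps -> closed_curve n (p t)) ->
     (forall t, - eps < t < eps -> Vol sigma n (p t) = Vol sigma n (p 0)) ->
     (forall k, (k < n)%nat -> p 0 k = Gamma n m a k) ->
     (forall k, (k < n)%nat ->
        is_derive (fun t => fst (p t k)) 0 (psi k * fst (vertex_normal sigma n (p 0) k)) /\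
        is_derive (fun t => snd (p t k)) 0 (psi k * snd (vertex_normal sigma n (p 0) k))) ->
     is_derive_n (fun t => Len n (p t)) 2 0 val) /\
  ((m = 1 \/ m = n - 1)%nat -> 0 <= val) /\
  ((2 <= m <= n - 2)%nat -> (A, B) <> (0, 0) -> val < 0).
Proof.
  intros Hn Hm H2m Ha Hs l0 psi val.
  assert (Hn0 : (0 < n)%nat) by lia.
  assert (Hsig : sigma * sigma = 1) by (destruct Hs; subst; lra).
  assert (Hl0 : 0 < 4 / l0) by (apply Rdiv_lt_0_compat; [lra | apply side_pos; assumption]).
  assert (HQ : 0 <= sumR n (fun k => psi k ^ 2)) by (apply sumR_nonneg; intros; apply pow2_ge_0).
  split; [|split; [|split; [|split]]].
  - intros k _. apply edge_len_Gamma; auto.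
  - apply mode_sum_zero; lia.
  - intros p eps Heps HC2 Hcl HV H0 Hd.
    replace val with (length_acceleration n p)
      by (apply (length_acceleration_Gamma n m a A B sigma eps); auto; lia).
    apply (length_second_derivative n eps p); assumption.
  - intros Hm1. pose proof (stability_coeff_nonneg n m Hn Hm1) as Hc.
    apply Rmult_le_pos; [apply Rmult_le_pos; [lra | exact Hc] | exact HQ].
  - intros Hm2 HAB. pose proof (stability_coeff_neg n m Hn Hm2 H2m).
    assert (0 < sumR n (fun k => psi k ^ 2)) by (apply mode_energy_pos; [lia | assumption]).
    assert (0 < 4 / l0 * - stability_coeff n m * sumR n (fun k => psi k ^ 2))
      by (apply Rmult_lt_0_compat; [apply Rmult_lt_0_compat|]; lra).
    unfold val, stability_coeff in *. lra.
Qed.
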